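(* For every integer $n\ge 1$, $5^n$ is selfcondensable; i.e., $5^n$ can be obtained from the digits of its own decimal representation (each used exactly once) using addition, subtraction, multiplication, division, powers and factorials.
   Context: For a finite nonempty multiset $S$ of real numbers, $V(S)$ is the smallest set of real numbers such that: (1) if $|S|=1$ then $S\subseteq V(S)$; (2) if $|S|\ge 2$, then for all nonempty multisets $A,B$ with $A+B=S$ (multiplicities add) and all $a\in V(A)$, $b\in V(B)$, each of $a+b,\ a-b,\ b-a,\ ab,\ a/b,\ b/a,\ a^b,\ b^a$ lies in $V(S)$ whenever it is a well-defined real number; (3) if $a\in V(S)$ is a nonnegative integer then $a!\in V(S)$ (with $0!=1$). A positive integer $N$ is selfcondensable if $N\in V(S_N)$, where $S_N$ is the multiset of the digits of the decimal representation of $N$ (each digit counted with its multiplicity). *)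

From Stdlib Require Import Reals List Permutation ZArith Arith.
Import ListNotations.
Open Scope R_scope.

(* a^b "whenever it is a well-defined real number":
   a > 0 (any real b), a = 0 with b > 0 (value 0),
   a <> 0 with b an integer (value powerRZ a b). *)
Definition pow_rel (a b r : R) : Prop :=
  (0 < a /\ r = Rpower a b)
  \/ (a = 0 /\ 0 < b /\ r = 0)
  \/ (a <> 0 /\ exists z : Z, b = IZR z /\ r = powerRZ a z).

Definition combine (a b r : R) : Prop :=
  r = a + b \/ r = a - b \/ r = b - a \/ r = a * b
  \/ (b <> 0 /\ r = a / b) \/ (a <> 0 /\ r = b / a)
  \/ pow_rel a b r \/ pow_rel b a r.

(* Multisets of reals are lists up to permutation.
   V S x  <->  x \in V(S)  (least set closed under the rules). *)
Inductive V : list R -> R -> Prop :=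
  | V_single : forall x, V [x] x
  | V_comb : forall (S A B : list R) (a b r : R),
      A <> [] -> B <> [] -> Permutation (A ++ B) S ->
      V A a -> V B b -> combine a b r -> V S r
  | V_fact : forall (S : list R) (k : nat),
      V S (INR k) -> V S (INR (fact k)).

(* decimal digits of n (least significant first), with fuel *)
Fixpoint digits_aux (fuel n : nat) : list nat :=
  match fuel with
  | O => []
  | S f => if (n <? 10)%nat then [n] else (n mod 10)%nat :: digits_aux f (n / 10)%nat
  end.

Definition digits (n : nat) : list nat := digits_aux n n.

Definition selfcondensable (N : nat) : Prop :=
  (1 <= N)%nat /\ V (map INR (digits N)) (INR N).

(* The last digit of 5^n is 5, so it suffices to build the exponent n from
   the other digits and take 5 ^ n.  For n <= 7 a direct search finds such an
   expression.  For n >= 8 the five lowest digits of 5^n depend only on n mod 8,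
   since 5^8 = 1 mod 2^5; in each of the eight cases the four of them other than
   the final 5 produce every integer in [-9, 8] with +, - and *.  The remaining
   digits are cut into blocks of value between 1 and 9 worth at least 2 per
   digit (a digit >= 2 alone, three digits 0 or 1 as (a! + b! + c!)! = 6).
   As 5^n has about 0.7 n digits, their total reaches n - 8, so adding or
   subtracting the blocks one at a time lands within [n - 8, n + 9], and the
   four low digits correct the remaining error. *)

From Pilot Require Import Defs.
From Stdlib Require Import Reals List Permutation ZArith Arith Lia ZifyNat.
Import ListNotations.

Lemma V_nonempty (S : list R) (x : R) : V S x -> S <> [].
Proof.
  induction 1 as [x| S A B a b r HA _ HAB| ]; try discriminate; auto.
  intros ->. apply Permutation_sym, Permutation_nil, app_eq_nil in HAB. tauto.
Qed.

Lemma V_perm (S S' : list R) (x : R) : Permutation S S' -> V S x -> V S' x.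
Proof.
  intros HS HV; revert S' HS.
  induction HV as [x| S A B a b r HA HB HAB HVa _ HVb _ Hr| S k _ IH]; intros S' HS.
  - apply Permutation_length_1_inv in HS as ->; apply V_single.
  - exact (V_comb S' A B a b r HA HB (perm_trans HAB HS) HVa HVb Hr).
  - apply V_fact, IH, HS.
Qed.

Open Scope Z_scope.

Definition obtainable (l : list nat) (z : Z) : Prop := V (map INR l) (IZR z).

Lemma obtainable_perm (l l' : list nat) (z : Z) :
  Permutation l l' -> obtainable l z -> obtainable l' z.
Proof. intros Hl; apply V_perm, Permutation_map, Hl. Qed.

Lemma obtainable_digit (d : nat) : obtainable [d] (Z.of_nat d).
Proof. unfold obtainable; rewrite <- INR_IZR_INZ; apply V_single. Qed.

Lemma obtainable_fact (l : list nat) (k : nat) :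
  obtainable l (Z.of_nat k) -> obtainable l (Z.of_nat (fact k)).
Proof. unfold obtainable; rewrite <- !INR_IZR_INZ; apply V_fact. Qed.

Lemma obtainable_combine (A B : list nat) (a b : Z) (r : R) :
  obtainable A a -> obtainable B b -> Defs.combine (IZR a) (IZR b) r -> V (map INR (A ++ B)) r.
Proof.
  intros Ha Hb Hr; rewrite map_app.
  apply (V_comb _ (map INR A) (map INR B) (IZR a) (IZR b) r); try assumption.
  - apply V_nonempty in Ha; destruct A; [contradiction | discriminate].
  - apply V_nonempty in Hb; destruct B; [contradiction | discriminate].
  - apply Permutation_refl.
Qed.

Lemma obtainable_add (A B : list nat) (a b : Z) :
  obtainable A a -> obtainable B b -> obtainable (A ++ B) (a + b).
Proof. intros Ha Hb; apply (obtainable_combine _ _ _ _ _ Ha Hb); left; apply plus_IZR. Qed.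

Lemma obtainable_sub (A B : list nat) (a b : Z) :
  obtainable A a -> obtainable B b -> obtainable (A ++ B) (a - b).
Proof. intros Ha Hb; apply (obtainable_combine _ _ _ _ _ Ha Hb); right; left; apply minus_IZR. Qed.

Lemma obtainable_mul (A B : list nat) (a b : Z) :
  obtainable A a -> obtainable B b -> obtainable (A ++ B) (a * b).
Proof. intros Ha Hb; apply (obtainable_combine _ _ _ _ _ Ha Hb); do 3 right; left; apply mult_IZR. Qed.

Lemma obtainable_pow (A B : list nat) (a : Z) (k : nat) :
  a <> 0 -> obtainable A a -> obtainable B (Z.of_nat k) -> obtainable (A ++ B) (a ^ Z.of_nat k).
Proof.
  intros Ha0 Ha Hk; apply (obtainable_combine _ _ _ _ _ Ha Hk); do 6 right; left.
  right; right; split; [now apply not_0_IZR |].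
  exists (Z.of_nat k); split; [reflexivity |].
  now rewrite <- pow_powerRZ, pow_IZR.
Qed.

Fixpoint splits {T : Type} (l : list T) : list (list T * list T) :=
  match l with
  | [] => [([], [])]
  | x :: l => flat_map (fun p => [(x :: fst p, snd p); (fst p, x :: snd p)]) (splits l)
  end.

Lemma in_splits_perm {T : Type} (l A B : list T) :
  In (A, B) (splits l) -> Permutation (A ++ B) l.
Proof.
  revert A B; induction l as [|x l IH]; intros A B; simpl.
  - intros [[= <- <-] | []]; reflexivity.
  - intros ([A' B'] & Hp & Hin)%in_flat_map; simpl in Hin.
    destruct Hin as [[= <- <-] | [[= <- <-] | []]]; simpl.
    + now apply perm_skip, IH.
    + apply Permutation_sym, Permutation_cons_app, Permutation_sym, IH, Hp.
Qed.

Definition leaf_values (d : nat) : list Z :=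
  match d with
  | O => [0; 1]
  | _ => [Z.of_nat d]
  end.

Definition op_values (xs ys : list Z) : list Z :=
  flat_map (fun a => flat_map (fun b => [a + b; a - b; a * b]) ys) xs.

(* Exhaustive search over expressions built with +, - and * from the digits,
   where a digit 0 may also be read as 0! = 1; [fuel] bounds the depth. *)
Fixpoint reachable_fuel (fuel : nat) (l : list nat) : list Z :=
  match fuel, l with
  | O, _ => []
  | S _, [d] => leaf_values d
  | S f, _ =>
      flat_map (fun p =>
        match p with
        | ([], _) | (_, []) => []
        | (A, B) => op_values (reachable_fuel f A) (reachable_fuel f B)
        end) (splits l)
  end.

Definition reachable (l : list nat) : list Z := reachable_fuel (length l) l.

Lemma leaf_values_sound (d : nat) (z : Z) : In z (leaf_values d) -> obtainable [d] z.
Proof.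
  destruct d as [|d]; simpl.
  - intros [<- | [<- | []]]; [| apply (obtainable_fact _ 0)]; apply (obtainable_digit 0).
  - intros [<- | []]; apply obtainable_digit.
Qed.

Lemma op_values_sound (A B : list nat) (xs ys : list Z) (z : Z) :
  (forall a, In a xs -> obtainable A a) -> (forall b, In b ys -> obtainable B b) ->
  In z (op_values xs ys) -> obtainable (A ++ B) z.
Proof.
  intros HA HB (a & Ha & (b & Hb & Hz)%in_flat_map)%in_flat_map.
  apply HA in Ha; apply HB in Hb.
  destruct Hz as [<- | [<- | [<- | []]]].
  - now apply obtainable_add.
  - now apply obtainable_sub.
  - now apply obtainable_mul.
Qed.

Lemma reachable_fuel_sound (fuel : nat) (l : list nat) (z : Z) :
  In z (reachable_fuel fuel l) -> obtainable l z.
Proof.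
  revert l z; induction fuel as [|f IH]; intros l z Hz; [destruct Hz |].
  destruct l as [|d [|e l]]; [destruct Hz | now apply leaf_values_sound |].
  cbn [reachable_fuel] in Hz.
  apply in_flat_map in Hz as ([[|x A] [|y B]] & HAB & Hz); try destruct Hz.
  apply (obtainable_perm _ _ _ (in_splits_perm _ _ _ HAB)).
  exact (op_values_sound _ _ _ _ _ (IH _) (IH _) Hz).
Qed.

Lemma reachable_sound (l : list nat) (z : Z) : In z (reachable l) -> obtainable l z.
Proof. apply reachable_fuel_sound. Qed.

Section Digits.
Local Open Scope nat_scope.

Lemma digits_aux_fuel (f g m : nat) :
  1 <= m -> m <= f -> m <= g -> digits_aux f m = digits_aux g m.
Proof.
  revert g m; induction f as [|f IH]; intros g m Hm Hf Hg; [lia |].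
  destruct g as [|g]; [lia |]; cbn [digits_aux].
  destruct (m <? 10) eqn:Hm10; [reflexivity |].
  apply Nat.ltb_ge in Hm10; f_equal.
  assert (1 <= m / 10) by (apply Nat.div_le_lower_bound; lia).
  assert (m / 10 < m) by (apply Nat.div_lt; lia).
  apply IH; lia.
Qed.

Lemma digits_small (m : nat) : 1 <= m < 10 -> digits m = [m].
Proof.
  intros Hm; unfold digits; destruct m as [|m]; [lia |]; cbn [digits_aux].
  now replace (S m <? 10) with true by (symmetry; apply Nat.ltb_lt; lia).
Qed.

Lemma digits_cons (m : nat) : 10 <= m -> digits m = m mod 10 :: digits (m / 10).
Proof.
  intros Hm; unfold digits at 1; destruct m as [|m]; [lia |]; cbn [digits_aux].
  replace (S m <? 10) with false by (symmetry; apply Nat.ltb_ge; lia); f_equal.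
  assert (1 <= S m / 10) by (apply Nat.div_le_lower_bound; lia).
  assert (S m / 10 < S m) by (apply Nat.div_lt; lia).
  apply digits_aux_fuel; lia.
Qed.

Lemma digits_ind (P : nat -> Prop) :
  (forall m, 1 <= m < 10 -> P m) ->
  (forall m, 10 <= m -> P (m / 10) -> P m) ->
  forall m, 1 <= m -> P m.
Proof.
  intros Hsmall Hstep m; induction m as [m IH] using lt_wf_ind; intros Hm.
  destruct (Nat.lt_ge_cases m 10); [now apply Hsmall |].
  apply Hstep, IH; [lia | apply Nat.div_lt | apply Nat.div_le_lower_bound]; lia.
Qed.

Lemma digits_le9 (m : nat) : 1 <= m -> Forall (fun d => d <= 9) (digits m).
Proof.
  revert m; apply digits_ind; intros k Hk.
  - rewrite digits_small by lia; constructor; [lia | constructor].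
  - intros IH; rewrite digits_cons by lia; constructor; [| exact IH].
    pose proof (Nat.mod_upper_bound k 10); lia.
Qed.

Lemma lt_pow10_length_digits (m : nat) : 1 <= m -> m < 10 ^ length (digits m).
Proof.
  revert m; apply digits_ind; intros k Hk.
  - rewrite digits_small by lia; simpl; lia.
  - intros IH; rewrite digits_cons by lia; cbn [length]; rewrite Nat.pow_succ_r'.
    pose proof (Nat.div_mod_eq k 10); pose proof (Nat.mod_upper_bound k 10); lia.
Qed.

Lemma digits_nonempty (m : nat) : 1 <= m -> digits m <> [].
Proof. intros Hm E; pose proof (lt_pow10_length_digits m Hm) as H; rewrite E in H; simpl in H; lia. Qed.

(* Zero-padded: [low_digits 5 3125 = [5; 2; 1; 3; 0]]. *)
Fixpoint low_digits (k a : nat) : list nat :=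
  match k with
  | O => []
  | S k => a mod 10 :: low_digits k (a / 10)
  end.

Lemma digits_add_mul_pow10 (k a b : nat) :
  1 <= b -> a < 10 ^ k -> digits (a + 10 ^ k * b) = low_digits k a ++ digits b.
Proof.
  revert a; induction k as [|k IH]; intros a Hb Ha; cbn [low_digits app].
  - rewrite Nat.pow_0_r in Ha |- *; now replace (a + 1 * b) with b by lia.
  - rewrite Nat.pow_succ_r' in Ha |- *.
    assert (Hpos := Nat.pow_nonzero 10 k ltac:(discriminate)).
    rewrite digits_cons by nia; f_equal.
    + now replace (a + 10 * 10 ^ k * b) with (a + 10 ^ k * b * 10) by lia;
        rewrite Nat.Div0.mod_add.
    + replace (a + 10 * 10 ^ k * b) with (a + 10 ^ k * b * 10) by lia.
      rewrite Nat.div_add by discriminate.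
      apply IH; [exact Hb | apply Nat.Div0.div_lt_upper_bound; lia].
Qed.

End Digits.

Definition valid_block (b : list nat * Z) : Prop := obtainable (fst b) (snd b) /\ 1 <= snd b <= 9.

Definition block_sum (bs : list (list nat * Z)) : Z := fold_right (fun b s => snd b + s) 0 bs.

Definition block_digits (bs : list (list nat * Z)) : list nat := concat (map fst bs).

(* Adding each block while below [t] and subtracting it while above keeps the
   running value, once within [t - 8, t + 9], inside that window. *)
Lemma steer_to_window (t : Z) (bs : list (list nat * Z)) :
  Forall valid_block bs -> forall (A : list nat) (v : Z), obtainable A v ->
  t - 8 <= v <= t + 9 \/ (v < t - 8 /\ t - 8 <= v + block_sum bs) ->
  exists w, obtainable (A ++ block_digits bs) w /\ t - 8 <= w <= t + 9.
Proof.
  induction 1 as [| [B c] bs [HB Hc] _ IH]; intros A v HA Hv; simpl in *.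
  - exists v; rewrite app_nil_r; split; [exact HA | lia].
  - unfold block_digits in *; simpl; rewrite app_assoc.
    destruct (Z.le_gt_cases v t).
    + apply (IH _ (v + c)); [now apply obtainable_add | lia].
    + apply (IH _ (v - c)); [now apply obtainable_sub | lia].
Qed.

Lemma blocks_to_window (t : Z) (bs : list (list nat * Z)) :
  bs <> [] -> Forall valid_block bs -> 0 <= t -> t - 8 <= block_sum bs ->
  exists w, obtainable (block_digits bs) w /\ t - 8 <= w <= t + 9.
Proof.
  destruct bs as [| [B c] bs]; [contradiction |]; intros _ Hbs Ht Hsum.
  apply Forall_cons_iff in Hbs as [[HB Hc] Hbs]; simpl in *.
  apply (steer_to_window t bs Hbs B c HB); lia.
Qed.

Lemma list_ind3 {T : Type} (P : list T -> Prop) :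
  P [] -> (forall a, P [a]) -> (forall a b, P [a; b]) ->
  (forall a b c l, P l -> P (a :: b :: c :: l)) -> forall l, P l.
Proof.
  intros H0 H1 H2 H3; fix IH 1.
  intros [| a [| b [| c l]]]; [exact H0 | apply H1 | apply H2 | apply H3, IH].
Qed.

(* Digits 0 and 1 are grouped in threes, each triple giving (a! + b! + c!)! = 6. *)
Fixpoint small_blocks (l : list nat) : list (list nat * Z) :=
  match l with
  | a :: b :: c :: l => ([a; b; c], 6) :: small_blocks l
  | _ => map (fun d => ([d], 1)) l
  end.

Definition blocks (U : list nat) : list (list nat * Z) :=
  map (fun d => ([d], Z.of_nat d)) (filter (fun d => 2 <=? d)%nat U)
  ++ small_blocks (filter (fun d => negb (2 <=? d)%nat) U).

Lemma obtainable_one (d : nat) : (d <= 1)%nat -> obtainable [d] 1.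
Proof.
  intros Hd; destruct d as [| [|]]; [| | lia].
  - exact (obtainable_fact _ 0 (obtainable_digit 0)).
  - exact (obtainable_digit 1).
Qed.

Lemma small_blocks_valid (l : list nat) :
  Forall (fun d => d <= 1)%nat l -> Forall valid_block (small_blocks l).
Proof.
  induction l as [| a | a b | a b c l IH] using list_ind3; intros Hl; simpl.
  - constructor.
  - inversion_clear Hl; repeat constructor; simpl; [now apply obtainable_one | lia | lia].
  - inversion_clear Hl as [| ? ? Ha Hb']; inversion_clear Hb';
      repeat constructor; simpl; try lia; now apply obtainable_one.
  - inversion_clear Hl as [| ? ? Ha Hl1]; inversion_clear Hl1 as [| ? ? Hb Hl2];
      inversion_clear Hl2 as [| ? ? Hc Hl3].
    constructor; [| now apply IH]; split; simpl; [| lia].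
    apply (obtainable_fact _ 3), (obtainable_add [a; b] [c] 2 1);
      [apply (obtainable_add [a] [b] 1 1) |]; now apply obtainable_one.
Qed.

Lemma small_blocks_digits (l : list nat) : block_digits (small_blocks l) = l.
Proof.
  induction l as [| a | a b | a b c l IH] using list_ind3; try reflexivity.
  unfold block_digits in *; simpl; now rewrite IH.
Qed.

Lemma small_blocks_sum (l : list nat) :
  2 * Z.of_nat (length l) - 2 <= block_sum (small_blocks l).
Proof.
  induction l as [| a | a b | a b c l IH] using list_ind3; try (simpl; lia).
  unfold block_sum in *; cbn [small_blocks length fold_right snd].
  rewrite !Nat2Z.inj_succ; lia.
Qed.

Lemma filter_negb_perm {T : Type} (f : T -> bool) (l : list T) :
  Permutation (filter f l ++ filter (fun x => negb (f x)) l) l.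
Proof.
  induction l as [|x l IH]; simpl; [reflexivity |].
  destruct (f x); simpl; [now apply perm_skip |].
  symmetry; apply Permutation_cons_app; now symmetry.
Qed.

Lemma block_digits_app (bs cs : list (list nat * Z)) :
  block_digits (bs ++ cs) = block_digits bs ++ block_digits cs.
Proof. unfold block_digits; now rewrite map_app, concat_app. Qed.

Lemma block_sum_app (bs cs : list (list nat * Z)) :
  block_sum (bs ++ cs) = block_sum bs + block_sum cs.
Proof. induction bs as [|b bs IH]; simpl; [reflexivity |]; unfold block_sum in *; lia. Qed.

Lemma singleton_blocks_digits (l : list nat) :
  block_digits (map (fun d => ([d], Z.of_nat d)) l) = l.
Proof. induction l as [|d l IH]; [reflexivity |]; unfold block_digits in *; simpl; now rewrite IH. Qed.

Lemma blocks_digits_perm (U : list nat) : Permutation (block_digits (blocks U)) U.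
Proof.
  unfold blocks; rewrite block_digits_app, singleton_blocks_digits, small_blocks_digits.
  apply filter_negb_perm.
Qed.

Lemma blocks_valid (U : list nat) :
  Forall (fun d => d <= 9)%nat U -> Forall valid_block (blocks U).
Proof.
  intros HU; apply Forall_app; split.
  - apply Forall_map, Forall_forall; intros d [Hd Hbig]%filter_In.
    apply Nat.leb_le in Hbig; rewrite Forall_forall in HU; specialize (HU d Hd).
    split; [apply obtainable_digit | simpl; lia].
  - apply small_blocks_valid, Forall_forall; intros d [_ Hsmall]%filter_In.
    apply Bool.negb_true_iff, Nat.leb_gt in Hsmall; lia.
Qed.

Lemma blocks_sum (U : list nat) : 2 * Z.of_nat (length U) - 2 <= block_sum (blocks U).
Proof.
  set (big := filter (fun d => 2 <=? d)%nat U).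
  assert (Hbig : 2 * Z.of_nat (length big) <= block_sum (map (fun d => ([d], Z.of_nat d)) big)).
  { assert (Hge : Forall (fun d => 2 <= d)%nat big).
    { apply Forall_forall; intros d [_ Hd]%filter_In; now apply Nat.leb_le. }
    induction Hge as [|d big Hd _ IH]; [reflexivity |].
    unfold block_sum in *; cbn [length map fold_right snd]; lia. }
  pose proof (Permutation_length (filter_negb_perm (fun d => 2 <=? d)%nat U)) as Hlen.
  rewrite length_app in Hlen.
  pose proof (small_blocks_sum (filter (fun d => negb (2 <=? d)%nat) U)).
  unfold blocks, big in *; rewrite block_sum_app; lia.
Qed.

Lemma obtainable_target (U K : list nat) (t : Z) :
  U <> [] -> Forall (fun d => d <= 9)%nat U -> 0 <= t ->
  t - 8 <= 2 * Z.of_nat (length U) - 2 ->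
  (forall z, -9 <= z <= 8 -> obtainable K z) -> obtainable (U ++ K) t.
Proof.
  intros HU H9 Ht Hlen HK.
  pose proof (blocks_digits_perm U) as Hperm.
  destruct (blocks_to_window t (blocks U)) as (w & Hw & Hwin).
  - intros E; rewrite E in Hperm; now apply HU, Permutation_nil.
  - now apply blocks_valid.
  - exact Ht.
  - pose proof (blocks_sum U); lia.
  - replace t with (w + (t - w)) by ring.
    apply (obtainable_perm (block_digits (blocks U) ++ K)); [now apply Permutation_app_tail |].
    apply obtainable_add; [exact Hw | apply HK; lia].
Qed.

Lemma selfcondensable_pow5 (n : nat) (R : list nat) :
  Permutation (5%nat :: R) (digits (5 ^ n)) -> obtainable R (Z.of_nat n) ->
  selfcondensable (5 ^ n).
Proof.
  intros Hperm HR; split.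
  - pose proof (Nat.pow_nonzero 5 n ltac:(discriminate)); lia.
  - rewrite INR_IZR_INZ, Nat2Z.inj_pow.
    apply (obtainable_perm ([5%nat] ++ R)); [exact Hperm |].
    apply obtainable_pow; [discriminate | apply obtainable_digit | exact HR].
Qed.

Definition small_ok (n : nat) : bool :=
  match digits (5 ^ n) with
  | 5%nat :: R => existsb (Z.eqb (Z.of_nat n)) (reachable R)
  | _ => false
  end.

Lemma selfcondensable_pow5_small (n : nat) : (2 <= n <= 7)%nat -> selfcondensable (5 ^ n).
Proof.
  intros Hn.
  assert (Hok : small_ok n = true).
  { do 8 (destruct n as [|n]; [try lia; vm_compute; reflexivity |]); lia. }
  unfold small_ok in Hok.
  destruct (digits (5 ^ n)) as [| [|[|[|[|[|[|d]]]]]] R] eqn:Hd; try discriminate.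
  apply existsb_exists in Hok as (z & Hz & Hnz%Z.eqb_eq); subst z.
  apply (selfcondensable_pow5 n R); [now rewrite Hd | now apply reachable_sound].
Qed.

Lemma pow5_mod_period (e : Z) : 5 <= e -> 5 ^ (e + 8) mod 10 ^ 5 = 5 ^ e mod 10 ^ 5.
Proof.
  intros He; replace e with (5 + (e - 5)) by ring.
  rewrite !Z.pow_add_r by lia.
  set (Y := 5 ^ (e - 5)).
  change (5 ^ 5) with 3125; change (5 ^ 8) with 390625; change (10 ^ 5) with 100000.
  replace (3125 * Y * 390625) with (3125 * Y + 12207 * Y * 100000) by ring.
  now rewrite Z.mod_add.
Qed.

Lemma pow5_mod_residue (n : nat) : (8 <= n)%nat ->
  5 ^ Z.of_nat n mod 10 ^ 5 = 5 ^ Z.of_nat (8 + n mod 8) mod 10 ^ 5.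
Proof.
  intros Hn.
  assert (Hq : forall (q : nat) (e : Z), 5 <= e ->
             5 ^ (e + 8 * Z.of_nat q) mod 10 ^ 5 = 5 ^ e mod 10 ^ 5).
  { induction q as [|q IH]; intros e He; [now rewrite Z.mul_0_r, Z.add_0_r |].
    replace (e + 8 * Z.of_nat (S q)) with (e + 8 * Z.of_nat q + 8) by lia.
    rewrite pow5_mod_period by lia; now apply IH. }
  replace (Z.of_nat n) with (Z.of_nat (8 + n mod 8) + 8 * Z.of_nat (n / 8 - 1))
    by (pose proof (Nat.div_mod_eq n 8); lia).
  apply Hq; lia.
Qed.

Lemma pow5_low_part (n : nat) : (8 <= n)%nat ->
  (5 ^ n mod 10 ^ 5)%nat = Z.to_nat (5 ^ Z.of_nat (8 + n mod 8) mod 10 ^ 5).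
Proof.
  intros Hn; rewrite <- pow5_mod_residue by exact Hn.
  apply Nat2Z.inj; rewrite Z2Nat.id by (apply Z.mod_pos_bound; lia).
  now rewrite Nat2Z.inj_mod, !Nat2Z.inj_pow.
Qed.

Definition window_obtainable (K : list nat) : bool :=
  forallb (fun i => existsb (Z.eqb (Z.of_nat i - 9)) (reachable K)) (seq 0 18).

Lemma window_obtainable_spec (K : list nat) :
  window_obtainable K = true -> forall z, -9 <= z <= 8 -> obtainable K z.
Proof.
  intros HK z Hz; apply reachable_sound.
  unfold window_obtainable in HK; rewrite forallb_forall in HK.
  specialize (HK (Z.to_nat (z + 9)) ltac:(apply in_seq; lia)).
  apply existsb_exists in HK as (x & Hx & Heq%Z.eqb_eq).
  now replace z with x by lia.
Qed.

Definition low_block_ok (a : nat) : bool :=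
  match low_digits 5 a with
  | 5%nat :: K => window_obtainable K
  | _ => false
  end.

Lemma low_block_ok_pow5 (r : nat) : (r < 8)%nat ->
  low_block_ok (Z.to_nat (5 ^ Z.of_nat (8 + r) mod 10 ^ 5)) = true.
Proof. intros Hr; do 8 (destruct r as [|r]; [vm_compute; reflexivity |]); lia. Qed.

Lemma pow5_low_digits (n : nat) : (8 <= n)%nat ->
  exists K, low_digits 5 (5 ^ n mod 10 ^ 5) = 5%nat :: K /\
            forall z, -9 <= z <= 8 -> obtainable K z.
Proof.
  intros Hn; rewrite pow5_low_part by exact Hn.
  generalize (low_block_ok_pow5 (n mod 8) ltac:(apply Nat.mod_upper_bound; lia)).
  unfold low_block_ok.
  destruct (low_digits 5 _) as [| [|[|[|[|[|[|d]]]]]] K]; try discriminate.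
  intros HK; exists K; split; [reflexivity | now apply window_obtainable_spec].
Qed.

(* [5 ^ (2 L + 7) = 25 ^ L * 5 ^ 7 >= 10 ^ (L + 5)] as soon as [L >= 1]. *)
Lemma exponent_le_twice_length (n L : Z) :
  0 <= n -> 1 <= L -> 5 ^ n < 10 ^ (L + 5) -> n <= 2 * L + 6.
Proof.
  intros Hn HL Hlt; apply Z.nlt_ge; intros Hbig.
  assert (H5 : 5 ^ (2 * (L - 1) + 9) <= 5 ^ n) by (apply Z.pow_le_mono_r; lia).
  assert (H10 : 10 ^ (L - 1) <= 25 ^ (L - 1)) by (apply Z.pow_le_mono_l; lia).
  replace (L + 5) with (L - 1 + 6) in Hlt by ring.
  rewrite Z.pow_add_r, Z.pow_mul_r in H5 by lia; rewrite Z.pow_add_r in Hlt by lia.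
  change (5 ^ 2) with 25 in H5; change (5 ^ 9) with 1953125 in H5;
    change (10 ^ 6) with 1000000 in Hlt.
  nia.
Qed.

Lemma pow5_quotient_pos (n : nat) : (8 <= n)%nat -> (1 <= 5 ^ n / 10 ^ 5)%nat.
Proof.
  intros Hn; apply Nat.div_str_pos; split.
  - apply Nat.neq_0_lt_0, Nat.pow_nonzero; discriminate.
  - apply Nat2Z.inj_le; rewrite !Nat2Z.inj_pow.
    apply Z.le_trans with (5 ^ 8); [vm_compute; discriminate | apply Z.pow_le_mono_r; lia].
Qed.

Lemma pow5_digits_split (n : nat) : (8 <= n)%nat ->
  digits (5 ^ n) = low_digits 5 (5 ^ n mod 10 ^ 5) ++ digits (5 ^ n / 10 ^ 5).
Proof.
  intros Hn; rewrite <- digits_add_mul_pow10.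
  - now rewrite Nat.add_comm, <- Nat.div_mod_eq.
  - now apply pow5_quotient_pos.
  - apply Nat.mod_upper_bound, Nat.pow_nonzero; discriminate.
Qed.

Lemma pow5_exponent_bound (n : nat) : (8 <= n)%nat ->
  Z.of_nat n <= 2 * Z.of_nat (length (digits (5 ^ n / 10 ^ 5))) + 6.
Proof.
  intros Hn.
  pose proof (lt_pow10_length_digits _ (pow5_quotient_pos n Hn)) as Hq.
  assert (Hlt : (5 ^ n < 10 ^ (length (digits (5 ^ n / 10 ^ 5)) + 5))%nat).
  { pose proof (Nat.div_mod_eq (5 ^ n) (10 ^ 5)) as Hdm.
    pose proof (Nat.mod_upper_bound (5 ^ n) (10 ^ 5) (Nat.pow_nonzero 10 5 ltac:(discriminate))).
    rewrite Nat.pow_add_r; revert Hq Hdm.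
    generalize (length (digits (5 ^ n / 10 ^ 5))) (5 ^ n / 10 ^ 5)%nat; intros L b.
    nia. }
  apply Nat2Z.inj_lt in Hlt; rewrite !Nat2Z.inj_pow, Nat2Z.inj_add in Hlt.
  apply exponent_le_twice_length; [lia | | exact Hlt].
  pose proof (digits_nonempty _ (pow5_quotient_pos n Hn)).
  destruct (digits (5 ^ n / 10 ^ 5)); [contradiction | cbn [length]; lia].
Qed.

Lemma selfcondensable_pow5_large (n : nat) : (8 <= n)%nat -> selfcondensable (5 ^ n).
Proof.
  intros Hn.
  destruct (pow5_low_digits n Hn) as (K & HK & HKwin).
  pose proof (pow5_exponent_bound n Hn) as Hbound.
  apply (selfcondensable_pow5 n (digits (5 ^ n / 10 ^ 5) ++ K)).
  - rewrite pow5_digits_split, HK by exact Hn; apply perm_skip, Permutation_app_comm.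
  - apply obtainable_target; [| | lia | lia | exact HKwin].
    + apply digits_nonempty, pow5_quotient_pos, Hn.
    + apply digits_le9, pow5_quotient_pos, Hn.
Qed.

Theorem theorem7p4 : forall n : nat, (1 <= n)%nat -> selfcondensable (5 ^ n).
Proof.
  intros n Hn.
  destruct (Nat.lt_ge_cases n 8) as [Hsmall | Hlarge].
  - destruct (Nat.eq_dec n 1) as [-> | Hn1].
    + split; [simpl; lia | exact (V_single _)].
    + apply selfcondensable_pow5_small; lia.
  - now apply selfcondensable_pow5_large.
Qed.
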